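(* Let $c=1/3$ for quadrangulations and $c=1/2$ for triangulations. For $0<u<1$, let $\mathcal P(L;u)$ be the limiting density of $L(ku)$ as $k\to\infty$ under $P_k$ (with $k$ ranging over integers for which $ku$ is an integer): $$\mathcal P(L;u)=\frac{2}{\sqrt\pi}\frac{\sqrt L}{c^{3/2}}e^{-L/c}\cdot\frac{\left(e^{\frac{L}{cb}}\sqrt{\frac{\pi L}{cb}}\left(1-\mathrm{erf}\sqrt{\frac{L}{cb}}\right)-1\right)p\!\left(\frac{L}{cb}\right)+r\!\left(\frac{L}{cb}\right)}{4(\sqrt b+b)^3},$$ where $$b=b(u)=\frac{(1-u)^2}{u^2},\qquad p(\ell)=2b(b^2-1)\ell^2-(5b^3+3b+4)\ell+6(b^3-1),\qquad r(\ell)=b(15b^2-1)\ell+2(5b^3-1).$$ Then $\tilde{\mathcal P}(R;u)=b(u)\,\mathcal P(b(u)R;u)$, the limiting density of $R(d)=\mathcal L(d)/(k-d)^2$ at $d=ku$, converges as $u\to1$ to $$\tilde{\mathcal P}(R;1)=2\sqrt{\frac{R}{\pi c^5}}\,(R+c)-\frac{R}{c^3}(2R+3c)\,e^{R/c}\left(1-\mathrm{erf}\sqrt{\frac Rc}\right).$$ Moreover $\mathcal P(L;u)\to\frac{2}{\sqrt\pi}\frac{\sqrt L}{c^{3/2}}e^{-L/c}$ as $u\to0$.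
   Context: A planar quadrangulation (resp. triangulation) is a planar map all of whose faces have degree 4 (resp. 3). A $k$-pointed-rooted map carries: - a marked vertex $v_0$; - a marked edge $e_1$ oriented from a vertex $v_1$ at graph distance $k$ from $v_0$ to a vertex at distance $k-1$. Cutting along the leftmost shortest path from $v_1$ to $v_0$ (first step $e_1$, then always the leftmost edge decreasing the distance to $v_0$) gives a $k$-slice. Its left boundary consists of the $k$ edges from $v_1$ to $v_0$, and its right boundary of the $k-1$ edges from the endpoint of $e_1$ to $v_0$. Hull perimeter, quadrangulations ($2\le d\le k-1$). Start at the right-boundary vertex $v^{(0)}$ at distance $d-1$. Repeatedly, from $v^{(i)}$, follow the leftmost 2-step path $v^{(i)}\to w\to v^{(i+1)}$, with respect to the first edge of the leftmost shortest path from $v^{(i)}$ to $v_0$, where $d(v_0,w)=d$, $d(v_0,v^{(i+1)})=d-1$ and $v^{(i+1)}\ne v^{(i)}$. This stops after $p$ steps at the left-boundary vertex at distance $d-1$, and $\mathcal L(d)=2p$. Hull perimeter, triangulations ($1\le d\le k-1$). Start at the right-boundary vertex at distance $d$. Repeatedly follow the leftmost edge, in the same sense, to a distinct vertex at distance $d$, until reaching the left-boundary vertex at distance $d$ after $p$ steps; then $\mathcal L(d)=p$. $P_k$ is the $N\to\infty$ limit of the uniform measure on $k$-pointed-rooted maps of the given type with $N$ faces. $L(d)=\mathcal L(d)/d^2$, and $\mathrm{erf}(a)=\frac{2}{\sqrt\pi}\int_0^ae^{-z^2}dz$. *)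

From Stdlib Require Import Reals.
From Coquelicot Require Import Coquelicot.
Open Scope R_scope.

Definition erf (a : R) : R :=
  2 / sqrt PI * RInt (fun z => exp (- (z ^ 2))) 0 a.

Definition bU (u : R) : R := (1 - u) ^ 2 / u ^ 2.

Definition pP (b l : R) : R :=
  2 * b * (b ^ 2 - 1) * l ^ 2 - (5 * b ^ 3 + 3 * b + 4) * l + 6 * (b ^ 3 - 1).

Definition rP (b l : R) : R :=
  b * (15 * b ^ 2 - 1) * l + 2 * (5 * b ^ 3 - 1).

Definition calP (c u L : R) : R :=
  let b := bU u in
  let l := L / (c * b) in
  2 / sqrt PI * sqrt L / (c * sqrt c) * exp (- L / c) *
  (((exp l * sqrt (PI * l) * (1 - erf (sqrt l)) - 1) * pP b l + rP b l)
   / (4 * (sqrt b + b) ^ 3)).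

Definition tildeP (c u R0 : R) : R := bU u * calP c u (bU u * R0).

Definition tildeP1 (c R0 : R) : R :=
  2 * sqrt (R0 / (PI * c ^ 5)) * (R0 + c)
  - R0 / c ^ 3 * (2 * R0 + 3 * c) * exp (R0 / c) * (1 - erf (sqrt (R0 / c))).

Definition calP0 (c L : R) : R :=
  2 / sqrt PI * sqrt L / (c * sqrt c) * exp (- L / c).

(** The substitution [s = sqrt (bU u) = (1 - u) / u] makes the argument
    [b R / (c b) = R / c] of the erf-term independent of [u], so [tildeP c u R]
    is an elementary function of [s], continuous at [s = 0]; its value there is
    [tildeP1 c R].  For [u -> 0] put [t = 1 / sqrt (bU u) = u / (1 - u)]: after
    multiplying numerator and denominator by [t ^ 6] (which clears
    [(sqrt b + b) ^ 3 = (1 + t) ^ 3 / t ^ 6]), [calP c u L] becomes a continuous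
    function of [t] in which erf is evaluated at [sqrt (L / c) * t], and the
    bracketed factor equals [((0 - 1) * 6 + 10) / 4 = 1] at [t = 0]. *)

From Stdlib Require Import Reals Lra.
From Coquelicot Require Import Coquelicot.
Open Scope R_scope.

Lemma continuous_gauss (x : R) : continuity_pt (fun z => exp (- z ^ 2)) x.
Proof. apply derivable_continuous_pt; reg. Qed.

Lemma ex_RInt_gauss (a b : R) : ex_RInt (fun z => exp (- z ^ 2)) a b.
Proof.
  apply (@ex_RInt_continuous R_CompleteNormedModule); intros z _.
  apply continuity_pt_filterlim, continuous_gauss.
Qed.

Lemma at_left_of_interval (a b : R) (P : R -> Prop) :
  a < b -> (forall u, a < u < b -> P u) -> at_left b P.
Proof.
  intros Hab HP.
  exists (mkposreal (b - a) ltac:(lra)); intros y Hy Hlt; apply HP.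
  apply Rabs_lt_between' in Hy; simpl in Hy; lra.
Qed.

Lemma at_right_of_interval (a b : R) (P : R -> Prop) :
  a < b -> (forall u, a < u < b -> P u) -> at_right a P.
Proof.
  intros Hab HP.
  exists (mkposreal (b - a) ltac:(lra)); intros y Hy Hgt; apply HP.
  apply Rabs_lt_between' in Hy; simpl in Hy; lra.
Qed.

Lemma filterlim_within_continuous (D : R -> Prop) (f : R -> R) (x : R) :
  continuous f x -> filterlim f (within D (locally x)) (locally (f x)).
Proof.
  apply filterlim_filter_le_1; apply filter_le_within; apply locally_filter.
Qed.

Lemma filterlim_eventually_comp_continuous {F : (R -> Prop) -> Prop} {FF : Filter F}
    (f g h : R -> R) (x : R) :
  F (fun u => f u = h (g u)) -> filterlim g F (locally x) -> continuous h x ->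
  filterlim f F (locally (h x)).
Proof.
  intros Hfg Hg Hh.
  apply (filterlim_ext_loc (fun u => h (g u))).
  - apply (filter_imp _ _ (fun u (e : f u = h (g u)) => eq_sym e)), Hfg.
  - exact (filterlim_comp _ _ _ g h F (locally x) _ Hg Hh).
Qed.

Definition tildeP_sqrtb (c R0 s : R) : R :=
  let l := R0 / c in
  let E := exp l * sqrt (PI * l) * (1 - erf (sqrt l)) in
  2 / sqrt PI * sqrt R0 / (c * sqrt c) * exp (- (s ^ 2 * R0) / c) *
  (((E - 1) * pP (s ^ 2) l + rP (s ^ 2) l) / (4 * (1 + s) ^ 3)).

Lemma tildeP_eq_sqrtb (c R0 u : R) : 0 < c -> 0 < R0 -> 0 < u < 1 ->
  tildeP c u R0 = tildeP_sqrtb c R0 ((1 - u) / u).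
Proof.
  intros Hc HR Hu; unfold tildeP, calP, tildeP_sqrtb; cbv zeta.
  set (s := (1 - u) / u).
  assert (Hs : 0 < s) by (unfold s; apply Rdiv_lt_0_compat; lra).
  assert (Hb : bU u = s ^ 2) by (unfold bU, s; field; lra).
  rewrite Hb.
  replace (s ^ 2 * R0 / (c * s ^ 2)) with (R0 / c) by (field; lra).
  rewrite (sqrt_mult_alt (s ^ 2) R0) by apply pow2_ge_0.
  rewrite sqrt_pow2 by lra.
  assert (sqrt PI > 0) by (apply sqrt_lt_R0, PI_RGT_0).
  assert (sqrt c > 0) by (apply sqrt_lt_R0; lra).
  field; repeat split; nra.
Qed.

Lemma tildeP_sqrtb_0 (c R0 : R) : 0 < c -> 0 < R0 ->
  tildeP_sqrtb c R0 0 = tildeP1 c R0.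
Proof.
  intros Hc HR; unfold tildeP_sqrtb, tildeP1, pP, rP; cbv zeta.
  assert (HPI : 0 < PI) by apply PI_RGT_0.
  rewrite (sqrt_mult_alt PI (R0 / c)) by lra.
  rewrite (sqrt_div_alt R0 (PI * c ^ 5)) by (apply Rmult_lt_0_compat; [lra | apply pow_lt; lra]).
  rewrite (sqrt_mult_alt PI (c ^ 5)) by lra.
  replace (c ^ 5) with ((c ^ 2) ^ 2 * c) by ring.
  rewrite (sqrt_mult_alt ((c ^ 2) ^ 2) c), sqrt_pow2 by apply pow2_ge_0.
  rewrite (sqrt_div_alt R0 c) by lra.
  replace (- (0 ^ 2 * R0) / c) with 0 by (field; lra); rewrite exp_0.
  set (X := exp (R0 / c) * (1 - erf (sqrt R0 / sqrt c))).
  replace (exp (R0 / c) * (sqrt PI * (sqrt R0 / sqrt c)) * (1 - erf (sqrt R0 / sqrt c)))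
    with (sqrt PI * (sqrt R0 / sqrt c) * X) by (unfold X; ring).
  replace (R0 / c ^ 3 * (2 * R0 + 3 * c) * exp (R0 / c) * (1 - erf (sqrt R0 / sqrt c)))
    with (R0 / c ^ 3 * (2 * R0 + 3 * c) * X) by (unfold X; ring).
  clearbody X.
  assert (Hsp : sqrt PI > 0) by (apply sqrt_lt_R0; lra).
  assert (Hsc : sqrt c > 0) by (apply sqrt_lt_R0; lra).
  assert (Hc2 : c = sqrt c * sqrt c) by (rewrite sqrt_sqrt; lra).
  assert (HR2 : R0 = sqrt R0 * sqrt R0) by (rewrite sqrt_sqrt; lra).
  set (sc := sqrt c) in *; set (sr := sqrt R0) in *; set (sp := sqrt PI) in *.
  clearbody sc sr sp; subst c R0.
  field; lra.
Qed.

Lemma continuous_tildeP_sqrtb (c R0 : R) : 0 < c -> continuous (tildeP_sqrtb c R0) 0.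
Proof.
  intros Hc; apply (@ex_derive_continuous R_AbsRing R_NormedModule).
  unfold tildeP_sqrtb, pP, rP; auto_derive.
  repeat split; lra.
Qed.

Lemma tildeP_limit_at_1 (c R0 : R) : 0 < c -> 0 < R0 ->
  filterlim (fun u => tildeP c u R0) (at_left 1) (locally (tildeP1 c R0)).
Proof.
  intros Hc HR.
  rewrite <- (tildeP_sqrtb_0 c R0) by assumption.
  apply (filterlim_eventually_comp_continuous _ (fun u => (1 - u) / u)).
  - apply (at_left_of_interval 0); [lra | intros u Hu; now apply tildeP_eq_sqrtb].
  - replace (locally 0) with (locally ((fun u => (1 - u) / u) 1)) by (f_equal; field).
    apply (filterlim_within_continuous _ (fun u => (1 - u) / u) 1).
    apply (@ex_derive_continuous R_AbsRing R_NormedModule).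
    auto_derive; lra.
  - now apply continuous_tildeP_sqrtb.
Qed.

Definition calP_inv_sqrtb (c L t : R) : R :=
  let x := L / c in
  let q := sqrt x in
  2 / sqrt PI * sqrt L / (c * sqrt c) * exp (- L / c) *
  (((exp (x * t ^ 2) * (sqrt PI * (q * t)) * (1 - erf (q * t)) - 1) *
     (2 * x ^ 2 * (1 - t ^ 4) * t ^ 4 - x * (5 * t ^ 2 + 3 * t ^ 6 + 4 * t ^ 8)
      + 6 * (1 - t ^ 6))
    + (x * (15 - t ^ 4) * t ^ 2 + 2 * (5 - t ^ 6))) / (4 * (1 + t) ^ 3)).

Lemma calP_eq_inv_sqrtb (c L u : R) : 0 < c -> 0 < L -> 0 < u < 1 ->
  calP c u L = calP_inv_sqrtb c L (u / (1 - u)).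
Proof.
  intros Hc HL Hu; unfold calP, calP_inv_sqrtb; cbv zeta.
  set (t := u / (1 - u)).
  assert (Ht : 0 < t) by (unfold t; apply Rdiv_lt_0_compat; lra).
  assert (Hb : bU u = (1 / t) ^ 2) by (unfold bU, t; field; lra).
  rewrite Hb.
  replace (L / (c * (1 / t) ^ 2)) with (L / c * t ^ 2) by (field; lra).
  rewrite (sqrt_mult_alt PI (L / c * t ^ 2)) by apply Rlt_le, PI_RGT_0.
  rewrite (sqrt_mult_alt (L / c) (t ^ 2)) by (apply Rlt_le, Rdiv_lt_0_compat; lra).
  rewrite (sqrt_pow2 t) by lra.
  rewrite (sqrt_pow2 (1 / t)) by (apply Rlt_le, Rdiv_lt_0_compat; lra).
  unfold pP, rP.
  assert (sqrt PI > 0) by (apply sqrt_lt_R0, PI_RGT_0).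
  assert (sqrt c > 0) by (apply sqrt_lt_R0; lra).
  field; repeat split; nra.
Qed.

Lemma calP_inv_sqrtb_0 (c L : R) : 0 < c -> calP_inv_sqrtb c L 0 = calP0 c L.
Proof.
  intros Hc; unfold calP_inv_sqrtb, calP0; cbv zeta.
  assert (sqrt PI > 0) by (apply sqrt_lt_R0, PI_RGT_0).
  assert (sqrt c > 0) by (apply sqrt_lt_R0; lra).
  field; lra.
Qed.

Lemma continuous_calP_inv_sqrtb (c L : R) : 0 < c -> continuous (calP_inv_sqrtb c L) 0.
Proof.
  intros Hc; apply (@ex_derive_continuous R_AbsRing R_NormedModule).
  unfold calP_inv_sqrtb, erf; auto_derive.
  repeat split; try lra; try apply ex_RInt_gauss.
  apply filter_forall, continuous_gauss.
Qed.

Lemma calP_limit_at_0 (c L : R) : 0 < c -> 0 < L ->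
  filterlim (fun u => calP c u L) (at_right 0) (locally (calP0 c L)).
Proof.
  intros Hc HL.
  rewrite <- (calP_inv_sqrtb_0 c L) by assumption.
  apply (filterlim_eventually_comp_continuous _ (fun u => u / (1 - u))).
  - apply (at_right_of_interval 0 1); [lra | intros u Hu; now apply calP_eq_inv_sqrtb].
  - replace (locally 0) with (locally ((fun u => u / (1 - u)) 0)) by (f_equal; field).
    apply (filterlim_within_continuous _ (fun u => u / (1 - u)) 0).
    apply (@ex_derive_continuous R_AbsRing R_NormedModule).
    auto_derive; lra.
  - now apply continuous_calP_inv_sqrtb.
Qed.

Theorem mainTheorem13 (c : R) (hc : c = 1 / 3 \/ c = 1 / 2) :
  (forall R0 : R, 0 < R0 ->
     filterlim (fun u => tildeP c u R0) (at_left 1) (locally (tildeP1 c R0))) /\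
  (forall L : R, 0 < L ->
     filterlim (fun u => calP c u L) (at_right 0) (locally (calP0 c L))).
Proof.
  assert (Hc : 0 < c) by (destruct hc; lra).
  split.
  - intros R0 HR; now apply tildeP_limit_at_1.
  - intros L HL; now apply calP_limit_at_0.
Qed.
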